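(* Let $G$ be a finite abelian group and let $f$ be an automorphism of $\mathcal{P}_{0}(G)$ with pullback $g$. Then $g$ is an automorphism of $G$.
   Context: For an additively written finite abelian group $G$, $\mathcal{P}_{0}(G)$ is the monoid of all subsets of $G$ containing $0$, with setwise addition and identity $\{0\}$. Every automorphism $f$ of $\mathcal{P}_0(G)$ maps $2$-element sets to $2$-element sets; the pullback of $f$ is the bijection $g:G\to G$ defined by $g(0)=0$ and, for nonzero $a\in G$, by $f(\{0,a\})=\{0,g(a)\}$. *)

From HB Require Import structures.
From mathcomp Require Import all_boot all_order all_algebra.
Set Implicit Arguments. Unset Strict Implicit. Unset Printing Implicit Defensive.
Import GRing.Theory.
Local Open Scope ring_scope.

Definition setadd (G : finZmodType) (A B : {set G}) : {set G} :=
  [set a + b | a in A, b in B].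

Definition P0 (G : finZmodType) := {A : {set G} | 0 \in A}.

Lemma setadd_P0 (G : finZmodType) (A B : {set G}) :
  0 \in A -> 0 \in B -> 0 \in setadd A B.
Proof.
move=> hA hB; apply/imset2P; exists 0 0 => //; by rewrite addr0.
Qed.

Definition P0add (G : finZmodType) (A B : P0 G) : P0 G :=
  exist _ (setadd (proj1_sig A) (proj1_sig B))
        (setadd_P0 (proj2_sig A) (proj2_sig B)).

Definition P0unit (G : finZmodType) : P0 G :=
  exist _ [set (0 : G)] (set11 (0 : G)).

Lemma zero_in_pair (G : finZmodType) (a : G) : (0 : G) \in [set 0; a].
Proof. by rewrite !inE eqxx. Qed.

Definition P0pair (G : finZmodType) (a : G) : P0 G :=
  exist _ [set 0; a] (zero_in_pair a).

Definition P0_automorphism (G : finZmodType) (f : P0 G -> P0 G) : Prop :=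
  bijective f /\
  (forall A B : P0 G, f (P0add A B) = P0add (f A) (f B)) /\
  f (P0unit G) = P0unit G.

Definition pullback (G : finZmodType) (f : P0 G -> P0 G) (g : G -> G) : Prop :=
  g 0 = 0 /\
  forall a : G, a != 0 -> proj1_sig (f (P0pair a)) = [set 0; g a].

Definition group_automorphism (G : finZmodType) (g : G -> G) : Prop :=
  bijective g /\ {morph g : x y / x + y}.

From mathcomp Require Import all_boot all_order all_algebra.
Set Implicit Arguments. Unset Strict Implicit. Unset Printing Implicit Defensive.
Import GRing.Theory.
Local Open Scope ring_scope.

(* The monoid structure of P_0(G) sees membership.  The sets
   allbut y = (G \ {y}) u {0}, y <> 0, are exactly the proper elements X with
   X + {0,t} = G for every t <> 0, and a set A with trivial stabiliser is a
   summand of allbut y as soon as y is not in A.  Since f fixes G and maps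
   {0,a} to {0,g a}, it preserves both facts, whence g c is in f A whenever
   c is in such an A and 2c <> 0.  For A = {0,a} + {0,b} = {0,a,b,a+b} this
   forces g (a + b) = g a + g b.  When a, b or a + b has order at most 2 one
   uses instead {0,y} + {0,z} = {0,y} + {0,y+z} for 2y = 0, and g (-a) = - g a
   is read off from which pairs {0,t} complete (G \ {a,2a}) u {0} to G. *)

Lemma addr_eq_self (V : zmodType) (x y : V) : (x + y == x) = (y == 0).
Proof. by rewrite -[X in _ == X]addr0 (inj_eq (addrI x)). Qed.

Section SubsetSums.
Variable G : finZmodType.
Implicit Types (A B X : P0 G) (a b c s t u x y z : G).

Definition P0_of (A : {set G}) : P0 G := exist _ (0 |: A) (setU11 0 A).

Definition P0full : P0 G := P0_of setT.

Definition allbut y : P0 G := P0_of [set~ y].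

Lemma P0_eqP A B : reflect (val A =i val B) (A == B).
Proof. by apply: (iffP eqP) => [-> // | AB]; apply/val_inj/setP. Qed.

Lemma mem_P0full z : z \in val P0full.
Proof. by rewrite !inE orbT. Qed.

Lemma mem_allbut y z : (z \in val (allbut y)) = (z == 0) || (z != y).
Proof. by rewrite !inE. Qed.

Lemma P0pair0 : P0pair 0 = P0unit G.
Proof. by apply: val_inj; rewrite /= setUid. Qed.

Lemma P0pair_inj : injective (@P0pair G).
Proof.
move=> a b /eqP /P0_eqP eab.
have := eab a; have := eab b; rewrite !inE !eqxx !orbT /=.
by move=> /orP[/eqP b0 | /eqP //] /esym /orP[/eqP a0 | /eqP //]; rewrite a0 b0.
Qed.

Lemma P0addC : commutative (@P0add G).
Proof.
move=> A B; apply/eqP/P0_eqP => z.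
by apply/imset2P/imset2P => -[x y xA yB ->]; exists y x => //; rewrite addrC.
Qed.

Lemma mem_P0addl A B z : z \in val A -> z \in val (P0add A B).
Proof. by move=> zA; apply/imset2P; exists z 0; rewrite ?addr0 //; exact: (valP B). Qed.

Lemma P0add_fulll X : P0add P0full X = P0full.
Proof.
apply/eqP/P0_eqP => z; rewrite mem_P0full; exact: mem_P0addl (mem_P0full z).
Qed.

Lemma mem_P0add_pair A t z :
  (z \in val (P0add A (P0pair t))) = (z \in val A) || (z - t \in val A).
Proof.
apply/imset2P/orP => [[x y xA] | [zA | ztA]].
- by rewrite !inE => /orP[] /eqP -> ->; [left; rewrite addr0 | right; rewrite addrK].
- by exists z 0; rewrite ?inE ?eqxx ?addr0.
- by exists (z - t) t; rewrite ?inE ?eqxx ?orbT ?subrK.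
Qed.

Lemma mem_P0add_pairs a b z :
  (z \in val (P0add (P0pair a) (P0pair b))) = [|| z == 0, z == a, z == b | z == a + b].
Proof.
rewrite mem_P0add_pair !inE subr_eq0 subr_eq.
by case: (z == 0); case: (z == a); case: (z == b).
Qed.

Lemma P0add_pair_idemE y : (P0add (P0pair y) (P0pair y) == P0pair y) = (y + y == 0).
Proof.
apply/P0_eqP/eqP => [/(_ (y + y)) | yy].
  rewrite mem_P0add_pairs eqxx !orbT /= !inE addr_eq_self.
  by case/esym/orP => /eqP // ->; rewrite addr0.
move=> z; rewrite mem_P0add_pairs /= !inE yy.
by case: (z == 0); case: (z == y).
Qed.

Lemma P0add_pair_full_opp X s :
  (P0add X (P0pair (- s)) == P0full) = (P0add X (P0pair s) == P0full).
Proof.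
suff cover_opp r : P0add X (P0pair r) = P0full -> P0add X (P0pair (- r)) = P0full.
  by apply/eqP/eqP => /cover_opp; rewrite ?opprK.
move=> Xr; apply/eqP/P0_eqP => z; rewrite mem_P0full mem_P0add_pair opprK.
by have := mem_P0full (z + r); rewrite -Xr mem_P0add_pair addrK orbC.
Qed.

Lemma allbut_add_pair y t : t != 0 -> P0add (allbut y) (P0pair t) = P0full.
Proof.
move=> t0; apply/eqP/P0_eqP => z.
rewrite mem_P0full mem_P0add_pair !mem_allbut.
have [-> | zy] := eqVneq z y; last by rewrite orbT.
by rewrite addr_eq_self oppr_eq0 t0 !orbT.
Qed.

Lemma pair_covering_allbut X :
  X != P0full -> (forall t, t != 0 -> P0add X (P0pair t) = P0full) ->
  exists2 u, u != 0 & X = allbut u.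
Proof.
move=> XnT Xcov.
have /existsP[u uX] : [exists u, u \notin val X].
  apply: contraNT XnT => /existsPn Xall; apply/P0_eqP => z.
  by rewrite mem_P0full; apply/negbNE.
have u0 : u != 0 by apply: contraNneq uX => ->; exact: (valP X).
exists u => //; apply/eqP/P0_eqP => z; rewrite mem_allbut.
have [-> | z0] := eqVneq z 0; first exact: (valP X).
have [-> | zu] := eqVneq z u; first exact: negbTE.
have := mem_P0full u; rewrite -(Xcov (u - z)) ?subr_eq0 1?eq_sym //.
by rewrite mem_P0add_pair (negbTE uX) subKr.
Qed.

Definition stable A t := P0add A (P0pair t) == A.

Definition aperiodic A := forall t, stable A t -> t = 0.

Lemma stableP A t : reflect {in val A, forall z, z + t \in val A} (stable A t).
Proof.
apply: (iffP eqP) => [At z zA | Acl]; first by rewrite -At mem_P0add_pair addrK zA orbT.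
apply/eqP/P0_eqP => z; rewrite mem_P0add_pair.
case zA: (z \in val A) => //=; apply/negbTE/negP => /Acl.
by rewrite subrK zA.
Qed.

Lemma stablePn A t :
  reflect (exists2 z, z \in val A & z + t \notin val A) (~~ stable A t).
Proof.
apply: (iffP idP) => [nAt | [z zA ztA]]; last first.
  by apply/negP => /stableP /(_ z zA); apply/negP.
have /exists_inP[z zA ztA] : [exists z in val A, z + t \notin val A].
  apply: contraR nAt => /exists_inPn Acl; apply/stableP => z /Acl; exact: negbNE.
by exists z.
Qed.

Lemma stable_mem A t : stable A t -> t \in val A.
Proof. by move=> /stableP /(_ 0 (valP A)); rewrite add0r. Qed.

Lemma stableD A s t : stable A s -> stable A t -> stable A (s + t).
Proof. by move=> /stableP As /stableP At; apply/stableP => z zA; rewrite addrA At ?As. Qed.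

Lemma aperiodic_pair c : c + c != 0 -> aperiodic (P0pair c).
Proof.
move=> cc t /[dup] /stable_mem; rewrite !inE => /orP[/eqP // | /eqP ->].
move=> /stableP /(_ c); rewrite !inE eqxx orbT addr_eq_self (negbTE cc) => /(_ isT) c0.
by rewrite (eqP c0) addr0 eqxx in cc.
Qed.

Lemma stable_pairs_add a b : a != 0 -> a + a != 0 ->
  let S := P0add (P0pair a) (P0pair b) in stable S a -> stable S (a + b).
Proof.
move=> a0 aa S Sa; have /stableP /(_ a) := Sa.
rewrite !mem_P0add_pairs eqxx orbT addr_eq_self (negbTE aa) (negbTE a0) /=.
move=> /(_ isT) /orP[/eqP e | /eqP <-].
  by rewrite -e; apply: stableD => //; apply: stableD.
by apply: stableD.
Qed.

Lemma aperiodic_pairs a b : a != 0 -> b != 0 -> a + a != 0 -> b + b != 0 ->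
  let S := P0add (P0pair a) (P0pair b) in ~~ stable S (a + b) -> aperiodic S.
Proof.
move=> a0 b0 aa bb S nSab t St; have := stable_mem St; rewrite mem_P0add_pairs.
case/or4P => /eqP tE //; case/negP: nSab; move: St; rewrite tE.
- exact: stable_pairs_add.
- by rewrite /S P0addC addrC; apply: stable_pairs_add.
- done.
Qed.

Lemma aperiodic_dvd_allbut A y :
  aperiodic A -> y != 0 -> y \notin val A -> exists C, P0add A C = allbut y.
Proof.
move=> Aap y0 yA; exists (P0_of [set z | y - z \notin val A]).
apply/eqP/P0_eqP => x; rewrite mem_allbut; apply/imset2P/idP.
- case=> a z aA; rewrite !inE => zC ->; apply/orP; right; apply/eqP => azy.
  case/orP: zC => [/eqP z0 | ]; first by move: yA; rewrite -azy z0 addr0 aA.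
  by rewrite -azy addrK aA.
- move=> x0y; have xy : x != y.
    by case/orP: x0y => // /eqP ->; rewrite eq_sym.
  have /stablePn[a aA ayx] : ~~ stable A (y - x).
    by apply: contra xy => /Aap /eqP; rewrite subr_eq0 eq_sym.
  exists a (x - a) => //; last by rewrite addrC subrK.
  by rewrite !inE opprB addrCA ayx orbT.
Qed.

Lemma compl_double_pair_full a t : a != 0 -> a + a != 0 ->
  (P0add (P0_of (~: [set a; a + a])) (P0pair t) == P0full) = (t \notin [set 0; a; - a]).
Proof.
move=> a0 aa; set N := P0_of _.
have mem_N z : (z \in val N) = (z == 0) || ((z != a) && (z != a + a)).
  by rewrite !inE negb_or.
have N_a : P0add N (P0pair a) != P0full.
  apply/negP => /P0_eqP /(_ (a + a)); rewrite mem_P0full mem_P0add_pair addrK !mem_N.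
  by rewrite !eqxx (negbTE a0) (negbTE aa) !andbF.
rewrite !inE; have [-> | t0] /= := eqVneq t 0.
  apply/negP => /P0_eqP /(_ a); rewrite mem_P0full mem_P0add_pair subr0 orbb mem_N.
  by rewrite eqxx (negbTE a0).
have [-> | ta] /= := eqVneq t a; first exact: negbTE.
have [-> | tma] /= := eqVneq t (- a); first by rewrite P0add_pair_full_opp (negbTE N_a).
apply/P0_eqP => z; rewrite mem_P0full mem_P0add_pair !mem_N.
have [-> | za] := eqVneq z a.
  apply/orP; right; rewrite addr_eq_self oppr_eq0 t0 (inj_eq (addrI a)) eqr_oppLR tma.
  by rewrite orbT.
have [-> | za2] := eqVneq z (a + a); last by rewrite /= orbT.
apply/orP; right; rewrite addr_eq_self oppr_eq0 t0 -addrA addr_eq_self subr_eq0.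
by rewrite (eq_sym a t) ta orbT.
Qed.
End SubsetSums.

Arguments P0full {G}.

Section PairPreservingAutomorphism.
Variables (G : finZmodType) (f : P0 G -> P0 G) (g : G -> G).
Hypotheses (f_bij : bijective f) (f_add : {morph f : A B / P0add A B}).
Hypotheses (g0 : g 0 = 0) (f_pair : forall a, f (P0pair a) = P0pair (g a)).
Implicit Types (A X : P0 G) (a b c t u y z : G).

Let f_inj : injective f := bij_inj f_bij.

Lemma f_add_pair X a : f (P0add X (P0pair a)) = P0add (f X) (P0pair (g a)).
Proof. by rewrite f_add f_pair. Qed.

Lemma f_full : f P0full = P0full.
Proof.
have [finv _ finvK] := f_bij.
by rewrite -{1}(P0add_fulll (finv P0full)) f_add finvK P0addC P0add_fulll.
Qed.

Lemma f_eq_full X : (f X == P0full) = (X == P0full).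
Proof. by rewrite -{1}f_full (inj_eq f_inj). Qed.

Lemma g_inj : injective g.
Proof. by move=> a b gab; apply/P0pair_inj/f_inj; rewrite !f_pair gab. Qed.

Lemma g_bij : bijective g.
Proof. exact: injF_bij g_inj. Qed.

Lemma g_eq0 a : (g a == 0) = (a == 0).
Proof. by rewrite -{1}g0 (inj_eq g_inj). Qed.

Lemma g_double_eq0 y : (g y + g y == 0) = (y + y == 0).
Proof. by rewrite -!P0add_pair_idemE -!f_pair -f_add (inj_eq f_inj). Qed.

Lemma g_opp a : g (- a) = - g a.
Proof.
have [aa | aa] := eqVneq (a + a) 0.
  have gaa : g a + g a = 0 by apply/eqP; rewrite g_double_eq0 aa.
  by rewrite (addr0_eq aa) (addr0_eq gaa).
have a0 : a != 0 by apply: contraNneq aa => ->; rewrite addr0.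
(* Covering by {0,t} is invariant under t |-> -t, so u is one of 0, a, -a. *)
have [ginv _ ginvK] := g_bij; set u := ginv (- g a).
have gu : g u = - g a := ginvK _.
have : u \in [set 0; a; - a].
  rewrite -[_ \in _]negbK -compl_double_pair_full // -f_eq_full f_add_pair gu.
  by rewrite P0add_pair_full_opp -f_add_pair f_eq_full compl_double_pair_full // !inE eqxx orbT.
rewrite !inE -orbA => /or3P[/eqP u0 | /eqP ua | /eqP <- //].
  by move: gu; rewrite u0 g0 => /eqP; rewrite eq_sym oppr_eq0 g_eq0 (negbTE a0).
by move: gu; rewrite ua => /eqP; rewrite eq_sym eqr_oppLR -addr_eq0 g_double_eq0 (negbTE aa).
Qed.

Lemma stable_f A t : stable (f A) (g t) = stable A t.
Proof. by rewrite /stable -f_add_pair (inj_eq f_inj). Qed.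

Lemma aperiodic_f A : aperiodic A -> aperiodic (f A).
Proof.
move=> Aap t; have [ginv _ ginvK] := g_bij.
by rewrite -(ginvK t) stable_f => /Aap ->.
Qed.

Lemma mem_f_stable A t : stable A t -> g t \in val (f A).
Proof. by rewrite -stable_f => /stable_mem. Qed.

Lemma g_add_of_mem a b : a != 0 -> b != 0 -> a + b != 0 ->
  g (a + b) \in val (f (P0add (P0pair a) (P0pair b))) -> g (a + b) = g a + g b.
Proof.
move=> a0 b0 ab0; rewrite f_add !f_pair mem_P0add_pairs -{1}g0 !(inj_eq g_inj).
by rewrite (negbTE ab0) addr_eq_self (negbTE b0) addrC addr_eq_self (negbTE a0) addrC => /eqP.
Qed.

Lemma g_add_order2 y z : y + y = 0 -> y != 0 -> z != 0 -> y + z != 0 ->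
  g (y + z) = g y + g z.
Proof.
move=> yy y0 z0 yz0; apply: g_add_of_mem => //.
have -> : P0add (P0pair y) (P0pair z) = P0add (P0pair y) (P0pair (y + z)).
  apply/eqP/P0_eqP => x; rewrite !mem_P0add_pairs addrA yy add0r.
  by rewrite [(x == z) || _]orbC.
by rewrite f_add !f_pair mem_P0add_pairs eqxx !orbT.
Qed.

Lemma f_eq_allbut X y : y != 0 -> f X = allbut y -> exists2 u, u != 0 & X = allbut u.
Proof.
move=> y0 fX; apply: pair_covering_allbut => [|t t0].
  rewrite -f_eq_full fX; apply/negP => /P0_eqP /(_ y).
  by rewrite mem_allbut mem_P0full eqxx (negbTE y0).
by apply/eqP; rewrite -f_eq_full f_add_pair fX allbut_add_pair ?g_eq0.
Qed.

Lemma mem_f_aperiodic A c : aperiodic A -> c \in val A -> c + c != 0 -> g c \in val (f A).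
Proof.
move=> Aap cA cc; apply/negPn/negP => gcA.
have c0 : c != 0 by apply: contraNneq cc => ->; rewrite addr0.
have gc0 : g c != 0 by rewrite g_eq0.
have [C fAC] := aperiodic_dvd_allbut (aperiodic_f Aap) gc0 gcA.
have [finv _ finvK] := f_bij; rewrite -[C]finvK -f_add in fAC.
have [u u0 Xu] := f_eq_allbut gc0 fAC.
(* {0,c} is also a summand of allbut u, so g c lies in f (allbut u) = allbut (g c). *)
have cu : u \notin val (P0pair c).
  have := mem_P0addl (finv C) cA; rewrite Xu mem_allbut (negbTE c0) /= !inE negb_or u0.
  by rewrite eq_sym.
have [D cD] := aperiodic_dvd_allbut (aperiodic_pair cc) u0 cu.
have gc_pair : g c \in val (P0pair (g c)) by rewrite !inE eqxx orbT.
have := mem_P0addl (f D) gc_pair.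
by rewrite -f_pair -f_add cD -Xu fAC mem_allbut eqxx (negbTE gc0).
Qed.

Lemma g_add : {morph g : a b / a + b}.
Proof.
move=> a b.
have [-> | a0] := eqVneq a 0; first by rewrite g0 !add0r.
have [-> | b0] := eqVneq b 0; first by rewrite g0 !addr0.
have [/eqP | ab0] := eqVneq (a + b) 0.
  by rewrite addr_eq0 => /eqP ->; rewrite addNr g_opp g0 addNr.
have [aa | aa0] := eqVneq (a + a) 0; first exact: g_add_order2.
have [bb | bb0] := eqVneq (b + b) 0.
  by rewrite addrC g_add_order2 1?addrC.
have [cc | cc0] := eqVneq ((a + b) + (a + b)) 0.
  have ma0 : - a != 0 by rewrite oppr_eq0.
  have := g_add_order2 cc ab0 ma0; rewrite addrC addKr g_opp => /(_ b0) ->.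
  by rewrite subrKC.
apply: g_add_of_mem => //.
have [Sab | nSab] := boolP (stable (P0add (P0pair a) (P0pair b)) (a + b)).
  exact: mem_f_stable.
apply: mem_f_aperiodic cc0; first exact: aperiodic_pairs.
by rewrite mem_P0add_pairs eqxx !orbT.
Qed.
End PairPreservingAutomorphism.

Lemma pullback_pairE (G : finZmodType) (f : P0 G -> P0 G) g :
  f (P0unit G) = P0unit G -> pullback f g -> forall a, f (P0pair a) = P0pair (g a).
Proof.
move=> f1 [g0 fg] a; have [-> | a0] := eqVneq a 0; first by rewrite g0 P0pair0 f1.
by apply: val_inj; rewrite /= fg.
Qed.

Theorem proposition2p6 (G : finZmodType) (f : P0 G -> P0 G) (g : G -> G) :
  P0_automorphism f -> pullback f g -> group_automorphism g.
Proof.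
move=> [f_bij [f_add f_unit]] pb; have f_pair := pullback_pairE f_unit pb.
split; first exact: g_bij f_bij f_pair.
exact: g_add f_bij f_add pb.1 f_pair.
Qed.
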